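(* Let $P$ be a finite lattice and $R,R'\in\mathrm{Tr}(P)$ with $\chi^R=\chi^{R'}$. Then $\chi^{R\vee R'}=\chi^R=\chi^{R'}$, where $R\vee R'$ is the join in $\mathrm{Tr}(P)$.
   Context: For a finite lattice $(P,\le)$, a transfer system on $P$ is a partial order $R$ on $P$ refining $\le$ that is closed under restriction: if $x\,R\,z$ and $y\le z$ then $(x\wedge y)\,R\,y$. $\mathrm{Tr}(P)$ is the lattice of transfer systems ordered by inclusion of relations; the join $R\vee R'$ is the smallest transfer system containing both. For $R\in\mathrm{Tr}(P)$ and $x\in P$, $\chi^R(x)$ denotes the least element of $\{y\in P: y\,R\,x\}$ (which exists). *)

From HB Require Import structures.
From mathcomp Require Import all_boot all_order.
Set Implicit Arguments. Unset Strict Implicit. Unset Printing Implicit Defensive.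
Import Order.Theory.
Local Open Scope order_scope.

Section TransferSystems.
Context {disp : Order.disp_t} {P : finTBLatticeType disp}.

Definition transfer_system (R : rel P) : bool :=
  [&& [forall x, R x x],
      [forall x, forall y, (R x y && R y x) ==> (x == y)],
      [forall x, forall y, forall z, (R x y && R y z) ==> R x z],
      [forall x, forall y, R x y ==> (x <= y)] &
      [forall x, forall y, forall z, (R x z && (y <= z)) ==> R (x `&` y) y]].

Definition subrelb (R S : rel P) : bool := [forall x, forall y, R x y ==> S x y].

(* join in Tr(P): the smallest transfer system containing R and R'
   (intersection of all transfer systems containing both; finite quantification
   over all relations on P, encoded as finite functions). *)
Definition tr_join (R R' : rel P) : rel P :=
  fun x y => [forall T : {ffun P -> {ffun P -> bool}},
    (transfer_system (fun a b => T a b) && subrelb R (fun a b => T a b)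
       && subrelb R' (fun a b => T a b)) ==> T x y].

(* chi^R(x): least element of {y | y R x}; for a transfer system this set
   contains x and is closed under meets, so its least element is its meet. *)
Definition chi (R : rel P) (x : P) : P := \meet_(y | R y x) y.

End TransferSystems.

(* Write [c] for [chi R = chi R'].  Since [c] is deflationary, monotone and
   idempotent, the relation [a <= b /\ c b <= a] is a transfer system, and it
   contains every transfer system refining [<=] whose [chi] is [c]; in
   particular it contains [R] and [R'], hence their join.  So every [y] related
   to [x] by the join lies above [c x], while [c x] itself is related to [x]
   already by [R]: the least such [y] is [c x]. *)

From mathcomp Require Import all_boot all_order.
Set Implicit Arguments.
Unset Strict Implicit.
Unset Printing Implicit Defensive.
Import Order.Theory.
Local Open Scope order_scope.

Section TransferSystemTheory.
Context {disp : Order.disp_t} {P : finTBLatticeType disp}.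
Implicit Types (R S : rel P) (x y z : P).

Lemma transfer_systemP R :
  reflect [/\ reflexive R, antisymmetric R, transitive R, subrel R <=%O &
              forall x y z, R x z -> y <= z -> R (x `&` y) y]
          (transfer_system R).
Proof.
apply: (iffP and5P) => [[/forallP refl /forallP anti /forallP trans
                          /forallP le /forallP restr] | [refl anti trans le restr]].
  split=> [x | x y /andP[Rxy Ryx] | y x z Rxy Ryz | x y Rxy | x y z Rxz le_yz].
  - exact: refl.
  - by apply/eqP; move: (anti x) => /forallP/(_ y)/implyP; apply; rewrite Rxy.
  - by move: (trans x) => /forallP/(_ y)/forallP/(_ z)/implyP; apply; rewrite Rxy.
  - by move: (le x) => /forallP/(_ y)/implyP; apply.
  - by move: (restr x) => /forallP/(_ y)/forallP/(_ z)/implyP; apply; rewrite Rxz le_yz.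
split; apply/forallP => x; do ?[apply/forallP => ?].
- exact: refl.
- by apply/implyP => /anti ->.
- by apply/implyP => /andP[]; apply: trans.
- by apply/implyP; apply: le.
- by apply/implyP => /andP[]; apply: restr.
Qed.

Lemma transfer_system_le R : transfer_system R -> subrel R <=%O.
Proof. by case/transfer_systemP. Qed.

Lemma eq_transfer_system R S : R =2 S -> transfer_system R = transfer_system S.
Proof.
move=> eRS; rewrite /transfer_system.
by congr [&& _, _, _, _ & _]; do ![apply: eq_forallb => ?]; rewrite !eRS.
Qed.

Lemma eq_subrelbr T R S : R =2 S -> subrelb T R = subrelb T S.
Proof. by move=> eRS; do ![apply: eq_forallb => ?]; rewrite eRS. Qed.

Lemma chi_min R x y : R y x -> chi R x <= y.
Proof. exact: meets_inf. Qed.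

Lemma tr_joinl R R' x y : R x y -> tr_join R R' x y.
Proof.
move=> Rxy; apply/forallP => T; apply/implyP => /andP[/andP[_ /forallP subRT] _].
by move: (subRT x) => /forallP/(_ y)/implyP; apply.
Qed.

Lemma tr_join_min R R' T : transfer_system T ->
  subrelb R T -> subrelb R' T -> subrel (tr_join R R') T.
Proof.
pose fT := [ffun a => [ffun b => T a b]].
have eT : (fun a b => fT a b) =2 T by move=> a b; rewrite !ffunE.
move=> tsT subRT subR'T x y /forallP/(_ fT)/implyP.
rewrite (eq_transfer_system eT) !(eq_subrelbr _ eT) tsT subRT subR'T => /(_ isT).
by rewrite !ffunE.
Qed.

Section ChiOfTransferSystem.
Variable R : rel P.
Hypothesis tsR : transfer_system R.

Lemma chi_rel x : R (chi R x) x.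
Proof.
have /transfer_systemP[refl _ trans le restr] := tsR.
suff : R (x `&` chi R x) x by rewrite (meet_idPr (chi_min (refl x))).
(* Restricting along [x `&` b <= x] makes the predecessors of [x] closed under meets. *)
apply: (big_ind (fun m => R (x `&` m) x)) => [|a b Ra Rb|y Ryx].
- by rewrite meetx1.
- rewrite -[x in x `&` _]meetxx meetACA.
  by apply: (trans _ _ _ _ Rb); apply: restr Ra _; rewrite leIl.
- by rewrite (meet_idPr (le _ _ Ryx)).
Qed.

Lemma chi_le x : chi R x <= x.
Proof. by apply: chi_min; case/transfer_systemP: tsR. Qed.

Lemma chi_homo : {homo chi R : x y / x <= y}.
Proof.
move=> x y le_xy; have /transfer_systemP[_ _ _ _ restr] := tsR.
have /chi_min le_cx : R (chi R y `&` x) x by apply: restr le_xy; apply: chi_rel.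
exact: le_trans le_cx (leIl _ _).
Qed.

Lemma chi_idem x : chi R (chi R x) = chi R x.
Proof.
apply/le_anti; rewrite chi_le chi_min //.
by case/transfer_systemP: tsR => _ _ trans _ _; apply: trans (chi_rel _) (chi_rel _).
Qed.

End ChiOfTransferSystem.

Section InteriorTransferSystem.
Variable c : P -> P.
Hypotheses (c_le : forall x, c x <= x) (c_homo : {homo c : x y / x <= y})
           (c_idem : forall x, c (c x) = c x).

Definition interior_rel : rel P := fun a b => (a <= b) && (c b <= a).

Lemma interior_rel_transfer_system : transfer_system interior_rel.
Proof.
apply/transfer_systemP; split.
- by move=> x; rewrite /interior_rel lexx c_le.
- by move=> x y /andP[/andP[le_xy _] /andP[le_yx _]]; apply/le_anti; rewrite le_xy.
- move=> y x z /andP[le_xy le_cyx] /andP[le_yz le_czy].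
  by rewrite /interior_rel (le_trans le_xy) // -c_idem (le_trans (c_homo le_czy)).
- by move=> x y /andP[].
- move=> x y z /andP[_ le_czx] le_yz.
  by rewrite /interior_rel leIr lexI c_le (le_trans (c_homo le_yz)).
Qed.

Lemma subrelb_interior_rel S : subrel S <=%O -> chi S =1 c -> subrelb S interior_rel.
Proof.
move=> leS chiS; do 2![apply/forallP => ?]; apply/implyP => Sab.
by rewrite /interior_rel leS // -chiS chi_min.
Qed.

End InteriorTransferSystem.

End TransferSystemTheory.

Theorem lemma2p8 (disp : Order.disp_t) (P : finTBLatticeType disp) (R R' : rel P) :
  transfer_system R -> transfer_system R' ->
  (forall x : P, chi R x = chi R' x) ->
  forall x : P, chi (tr_join R R') x = chi R x /\ chi (tr_join R R') x = chi R' x.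
Proof.
move=> tsR tsR' chiRR' x; rewrite -chiRR'.
suff -> : chi (tr_join R R') x = chi R x by [].
have join_interior : subrel (tr_join R R') (interior_rel (chi R)).
  apply: tr_join_min.
  - by apply: interior_rel_transfer_system; [exact: chi_le | exact: chi_homo | exact: chi_idem].
  - exact: subrelb_interior_rel (transfer_system_le tsR) (frefl _).
  - by apply: subrelb_interior_rel (transfer_system_le tsR') _ => y; rewrite chiRR'.
apply/le_anti/andP; split.
- exact/chi_min/tr_joinl/chi_rel.
- by apply/meetsP => y /join_interior /andP[].
Qed.
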